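(* Let a binary game be given as described in the context. Suppose compensation payments incur no cost in both problems (S) and (P), i.e. $G\equiv 0$. Let $(x_i^\circ,y_i^\circ)_{i\in I}$ be an optimal solution of the social-planner problem (S) and $(x_i^*,y_i^* )_{i\in I}$ the $(x,y)$-part of an optimal solution of problem (P). Then $F((x_i^\circ,y_i^\circ)_{i\in I})\le F((x_i^*,y_i^* )_{i\in I})$.
   Context: Binary game: players $i\in I=\{1,\dots,n\}$. Player $i$ chooses $x_i\in\{0,1\}$ and $y_i\in\mathbb{R}^m$ and solves $\min f_i(x_i,y_i,y_{-i})$ subject to $g_i(x_i,y_i)\le 0$, with $g_i:\{0,1\}\times\mathbb{R}^m\to\mathbb{R}^k$, $y_{-i}=(y_j)_{j\ne i}$. $F$ is a function of $(x_i,y_i)_{i\in I}$ and $G$ a function of compensations $(\zeta_i)_{i\in I}$, $\zeta_i\ge0$. Social-planner problem (S): first $(x_i^\circ,y_i^\circ)_{i}$ minimizes $F((x_i,y_i)_i)$ subject to $g_i(x_i,y_i)\le0$, $x_i\in\{0,1\}$ for all $i$; then $(\zeta_i^\circ)_i$ minimizes $G$ subject to $f_i(x_i^\circ,y_i^\circ,y_{-i}^\circ)-\zeta_i\le f_i(x_i^\times,y_i^\times,y_{-i}^\circ)$ for all $i$ and all $(x_i^\times,y_i^\times)\in\arg\min\{f_i(x,y,y_{-i}^\circ): x\in\{0,1\},\ g_i(x,y)\le0\}$; the objective value of (S) is $F((x_i^\circ,y_i^\circ)_i)+G((\zeta_i^\circ)_i)$. Problem (P): with a sufficiently large constant $\widetilde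 K>0$, minimize $F((x_i,y_i)_{i})+G((\zeta_i^{(1)},\zeta_i^{(0)})_{i})$ over $x_i\in\{0,1\}$, $y_i,\widetilde y_i^{(1)},\widetilde y_i^{(0)}\in\mathbb{R}^m$, $\widetilde\lambda_i^{(b)}\in\mathbb{R}^k_+$, $\kappa_i^{(b)},\zeta_i^{(b)}\ge0$, subject to, for all $i$, $b\in\{0,1\}$: $\nabla_{y_i} f_i(b,\widetilde y_i^{(b)},y_{-i})+(\widetilde\lambda_i^{(b)})^T\nabla_{y_i} g_i(b,\widetilde y_i^{(b)})=0$; $0\le -g_i(b,\widetilde y_i^{(b)})\perp\widetilde\lambda_i^{(b)}\ge0$; $f_i(1,\widetilde y_i^{(1)},y_{-i})+\kappa_i^{(1)}-\zeta_i^{(1)}-\kappa_i^{(0)}+\zeta_i^{(0)}=f_i(0,\widetilde y_i^{(0)},y_{-i})$; $\kappa_i^{(1)}+\zeta_i^{(1)}\le x_i\widetilde K$; $\kappa_i^{(0)}+\zeta_i^{(0)}\le(1-x_i)\widetilde K$; $\widetilde y_i^{(0)}-x_i\widetilde K\le y_i\le\widetilde y_i^{(0)}+x_i\widetilde K$; $\widetilde y_i^{(1)}-(1-x_i)\widetilde K\le y_i\le\widetilde y_i^{(1)}+(1-x_i)\widetilde K$. *)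

From HB Require Import structures.
From mathcomp Require Import all_boot all_order all_algebra.
From mathcomp Require Import all_classical all_reals all_analysis.
Set Implicit Arguments. Unset Strict Implicit. Unset Printing Implicit Defensive.
Import Order.TTheory GRing.Theory Num.Theory.
Import numFieldNormedType.Exports.
Local Open Scope ring_scope.

Section BinaryGame.
Variables (R : realType) (n m k : nat).

(* Data of the game:
   f i b z y  = f_i(b, z, y_{-i})   (y : full profile; f i must not read y i, see f_indep)
   g i b z    = g_i(b, z) in R^k
   F x y      = social cost F((x_i,y_i)_i). *)
Definition profile := 'I_n -> 'rV[R]_m.

Definition f_indep (f : 'I_n -> bool -> 'rV[R]_m -> profile -> R) : Prop :=
  forall i b z (y y' : profile), (forall j, j != i -> y j = y' j) -> f i b z y = f i b z y'.

Definition g_le0 (gi : bool -> 'rV[R]_m -> 'rV[R]_k) b z : Prop :=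
  forall l, gi b z 0 l <= 0.

Definition grad (h : 'rV[R]_m -> R) (z : 'rV[R]_m) : 'rV[R]_m :=
  (jacobian (fun w : 'rV[R]_m => (h w)%:M : 'rV[R]_1) z)^T.

Variables (f : 'I_n -> bool -> 'rV[R]_m -> profile -> R)
          (g : 'I_n -> bool -> 'rV[R]_m -> 'rV[R]_k)
          (F : ('I_n -> bool) -> profile -> R).

Definition S_feasible (x : 'I_n -> bool) (y : profile) : Prop :=
  forall i, g_le0 (g i) (x i) (y i).

Definition player_argmin i (y : profile) (b : bool) (z : 'rV[R]_m) : Prop :=
  g_le0 (g i) b z /\
  forall b' z', g_le0 (g i) b' z' -> f i b z y <= f i b' z' y.

Definition S_comp_feasible (x : 'I_n -> bool) (y : profile) (zeta : 'I_n -> R) : Prop :=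
  forall i, 0 <= zeta i /\
    forall b z, player_argmin i y b z -> f i (x i) (y i) y - zeta i <= f i b z y.

Definition S_optimal (x : 'I_n -> bool) (y : profile) (zeta : 'I_n -> R) : Prop :=
  (* with G == 0 every feasible zeta minimizes G, so optimality of zeta = feasibility *)
  [/\ S_feasible x y,
      (forall x' y', S_feasible x' y' -> F x y <= F x' y') &
      S_comp_feasible x y zeta].

Definition P_constraints (K : R) (x : 'I_n -> bool) (y : profile)
  (yt : bool -> profile) (lam : bool -> 'I_n -> 'rV[R]_k)
  (kappa zeta : bool -> 'I_n -> R) : Prop :=
  forall i,
  [/\ (forall b : bool,
        [/\ grad (fun z => f i b z y) (yt b i) + lam b i *m (jacobian (g i b) (yt b i))^T = 0,
            (forall l, 0 <= - g i b (yt b i) 0 l),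
            (forall l, 0 <= lam b i 0 l),
            \sum_(l < k) (- g i b (yt b i) 0 l) * lam b i 0 l = 0 &
            0 <= kappa b i /\ 0 <= zeta b i]),
      f i true (yt true i) y + kappa true i - zeta true i - kappa false i + zeta false i
        = f i false (yt false i) y,
      kappa true i + zeta true i <= (x i)%:R * K,
      kappa false i + zeta false i <= (1 - (x i)%:R) * K &
      (forall j, [/\ yt false i 0 j - (x i)%:R * K <= y i 0 j,
                    y i 0 j <= yt false i 0 j + (x i)%:R * K,
                    yt true i 0 j - (1 - (x i)%:R) * K <= y i 0 j &
                    y i 0 j <= yt true i 0 j + (1 - (x i)%:R) * K])].

Definition P_feasible K x y : Prop :=
  exists yt lam kappa zeta, P_constraints K x y yt lam kappa zeta.

(* (x,y)-part of an optimal solution of (P) with G == 0: objective is F x y *)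
Definition P_optimal_xy K x y : Prop :=
  P_feasible K x y /\ forall x' y', P_feasible K x' y' -> F x y <= F x' y'.

End BinaryGame.

From HB Require Import structures.
From mathcomp Require Import all_boot all_order all_algebra.
From mathcomp Require Import all_classical all_reals all_analysis.
Set Implicit Arguments. Unset Strict Implicit.
Import Order.TTheory GRing.Theory Num.Theory.
Local Open Scope ring_scope.

(* The big-M constraints of (P) pin y_i to the auxiliary point ytilde_i^(x_i)
   of the selected branch, and the complementarity constraints make that point
   satisfy g_i(x_i, .) <= 0.  So the (x,y)-part of a feasible point of (P) is
   feasible for the first stage of (S), and with G = 0 the optimality of (S)
   gives the bound. *)

Section PFeasibleIsSFeasible.
Variables (R : realType) (n m k : nat).
Variables (f : 'I_n -> bool -> 'rV[R]_m -> profile R n m -> R)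
          (g : 'I_n -> bool -> 'rV[R]_m -> 'rV[R]_k).

Lemma big_M_selects_branch (K : R) (b : bool) (y : 'rV[R]_m)
    (yt : bool -> 'rV[R]_m) :
  (forall j, [/\ yt false 0 j - b%:R * K <= y 0 j,
                 y 0 j <= yt false 0 j + b%:R * K,
                 yt true 0 j - (1 - b%:R) * K <= y 0 j &
                 y 0 j <= yt true 0 j + (1 - b%:R) * K]) ->
  y = yt b.
Proof.
move=> Hbox; apply/matrixP => a j; rewrite [a]ord1.
have [lo0 hi0 lo1 hi1] := Hbox j.
apply/eqP; rewrite eq_le.
case: b {Hbox} lo0 hi0 lo1 hi1 => /= lo0 hi0 lo1 hi1.
- by rewrite subrr mul0r subr0 addr0 in lo1 hi1; rewrite hi1 lo1.
- by rewrite mul0r subr0 addr0 in lo0 hi0; rewrite hi0 lo0.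
Qed.

Lemma P_constraints_S_feasible (K : R) (x : 'I_n -> bool) (y : profile R n m)
    (yt : bool -> profile R n m) (lam : bool -> 'I_n -> 'rV[R]_k)
    (kappa zeta : bool -> 'I_n -> R) :
  P_constraints f g K x y yt lam kappa zeta -> S_feasible g x y.
Proof.
move=> HP i l.
have [Hbranch _ _ _ Hbox] := HP i.
have -> : y i = yt (x i) i by exact: (@big_M_selects_branch K _ _ (yt^~ i) Hbox).
have [_ Hg _ _ _] := Hbranch (x i).
by rewrite -oppr_ge0.
Qed.

Lemma P_feasible_S_feasible (K : R) (x : 'I_n -> bool) (y : profile R n m) :
  P_feasible f g K x y -> S_feasible g x y.
Proof. by move=> [yt [lam [kappa [zeta /P_constraints_S_feasible]]]]. Qed.

End PFeasibleIsSFeasible.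

Theorem theorem6 (R : realType) (n m k : nat)
  (f : 'I_n -> bool -> 'rV[R]_m -> profile R n m -> R)
  (g : 'I_n -> bool -> 'rV[R]_m -> 'rV[R]_k)
  (F : ('I_n -> bool) -> profile R n m -> R)
  (K : R)
  (xo : 'I_n -> bool) (yo : profile R n m) (zetao : 'I_n -> R)
  (xs : 'I_n -> bool) (ys : profile R n m) :
  f_indep f -> 0 < K ->
  S_optimal f g F xo yo zetao ->
  P_optimal_xy f g F K xs ys ->
  F xo yo <= F xs ys.
Proof.
move=> _ _ [_ S_min _] [P_feas _].
exact: S_min (P_feasible_S_feasible P_feas).
Qed.
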